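(* Let $X$ be a real Banach space and let $A: X \rightrightarrows X^*$ be a maximal monotone operator whose Fitzpatrick family is a singleton, i.e. $\mathcal{F}_A = \{F_A\}$. Then the following are equivalent: (i) $A$ is $3$-monotone; (ii) $A$ is cyclically monotone. Moreover, in this case, for every $v^* \in \mathrm{Im}(A)$ the function $x \mapsto F_A(x,v^* )$ is proper, convex and lower semicontinuous on $X$, and \[ A = \partial F_A(\cdot, v^* ). \]
   Context: A function $h: X\times X^* \to \mathbb{R}\cup\{+\infty\}$ is a representative function of $A$ if (R1) $h$ is proper, convex and lower semicontinuous; (R2) $h(x,x^* ) \ge \langle x,x^*\rangle$ for all $(x,x^* )\in X\times X^*$; (R3) $h(x,x^* ) = \langle x,x^*\rangle$ for all $(x,x^* )\in \mathrm{Gr}(A)$. The Fitzpatrick family $\mathcal{F}_A$ is the set of all representative functions of $A$. The Fitzpatrick function is $F_A(x,x^* ) = \sup_{(y,y^* )\in\mathrm{Gr}(A)}\{\langle y,x^*\rangle + \langle x,y^*\rangle - \langle y,y^*\rangle\}$. $\mathrm{Im}(A) = \{x^*: \exists x,\ x^*\in Ax\}$. $A$ is $n$-monotone if $\sum_{i=1}^n \langle a_i,a_i^*\rangle \ge \sum_{i=1}^n \langle a_{i+1},a_i^*\rangle$ for all $(a_i,a_i^* )\in\mathrm{Gr}(A)$, $i=1,\dots,n$, with $a_{n+1}=a_1$; cyclically monotone means $n$-monotone for all $n\in\mathbb{N}$. $\partial$ denotes the convex subdifferential. *)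

(* X : a real Banach space (completeNormedModType R
   over a realType R); the dual X-star is represented by the functions X -> R that
   are linear and continuous (predicate [is_dual]); the duality pairing
   <x, x-star> is the application x-star x. *)
From HB Require Import structures.
From mathcomp Require Import all_boot all_order all_algebra.
From mathcomp Require Import all_classical all_reals all_analysis.
Set Implicit Arguments. Unset Strict Implicit. Unset Printing Implicit Defensive.
Import Order.TTheory GRing.Theory Num.Theory.
Import numFieldNormedType.Exports.
Local Open Scope classical_set_scope.
Local Open Scope ring_scope.

Section Defs.
Variables (R : realType) (X : completeNormedModType R).

Definition is_dual (f : X -> R) : Prop :=
  (forall (a : R) (x y : X), f (a *: x + y) = a * f x + f y) /\ continuous f.

Definition dual_valued (A : X -> set (X -> R)) : Prop :=
  forall x xs, A x xs -> is_dual xs.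

Definition monotone_op (A : X -> set (X -> R)) : Prop :=
  forall x xs y ys, A x xs -> A y ys -> 0 <= xs (x - y) - ys (x - y).

Definition maximal_monotone (A : X -> set (X -> R)) : Prop :=
  dual_valued A /\ monotone_op A /\
  forall x xs, is_dual xs ->
    (forall y ys, A y ys -> 0 <= xs (x - y) - ys (x - y)) -> A x xs.

(* n-monotonicity, with a_{n+1} = a_1 (indices 0..n-1, a_n := a_0) *)
Definition n_monotone (A : X -> set (X -> R)) (n : nat) : Prop :=
  forall (a : nat -> X) (as_ : nat -> (X -> R)),
    (forall i, (i < n)%N -> A (a i) (as_ i)) ->
    \sum_(i < n) as_ i (a (i.+1 %% n)%N) <= \sum_(i < n) as_ i (a i).

Definition cyclically_monotone (A : X -> set (X -> R)) : Prop :=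
  forall n : nat, n_monotone A n.

Definition Im_op (A : X -> set (X -> R)) : set (X -> R) :=
  [set xs | exists x, A x xs].

Definition fitzpatrick (A : X -> set (X -> R)) (x : X) (xs : X -> R) : \bar R :=
  ereal_sup [set z | exists y ys, A y ys /\ z = (ys x + xs y - ys y)%:E].

(* Properness, convexity, lower semicontinuity on X × X-star
   (norm topology on X and dual-norm topology on X-star). *)
Definition proper2 (h : X -> (X -> R) -> \bar R) : Prop :=
  (forall x xs, is_dual xs -> h x xs != -oo%E) /\
  (exists x xs, is_dual xs /\ h x xs \is a fin_num).

Definition convex2 (h : X -> (X -> R) -> \bar R) : Prop :=
  forall x xs y ys (l t s : R), is_dual xs -> is_dual ys ->
    0 <= l <= 1 -> (h x xs <= t%:E)%E -> (h y ys <= s%:E)%E ->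
    (h (l *: x + (1 - l) *: y)%R (fun z => l * xs z + (1 - l) * ys z)%R
       <= (l * t + (1 - l) * s)%:E)%E.

(* ys lies in the closed dual-norm ball of radius e around xs *)
Definition dual_close (xs ys : X -> R) (e : R) : Prop :=
  forall z, `|ys z - xs z| <= e * `|z|.

Definition lsc2 (h : X -> (X -> R) -> \bar R) : Prop :=
  forall x xs (t : R), is_dual xs -> (t%:E < h x xs)%E ->
    exists2 e : R, 0 < e & forall y ys, is_dual ys ->
      `|y - x| < e -> dual_close xs ys e -> (t%:E < h y ys)%E.

Definition representative (A : X -> set (X -> R)) (h : X -> (X -> R) -> \bar R)
  : Prop :=
  [/\ proper2 h /\ convex2 h /\ lsc2 h,
      (forall x xs, is_dual xs -> ((xs x)%:E <= h x xs)%E) &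
      (forall x xs, A x xs -> h x xs = (xs x)%:E)].

Definition proper1 (f : X -> \bar R) : Prop :=
  (forall x, f x != -oo%E) /\ (exists x, f x \is a fin_num).

Definition convex1 (f : X -> \bar R) : Prop :=
  forall x y (l t s : R), 0 <= l <= 1 -> (f x <= t%:E)%E -> (f y <= s%:E)%E ->
    (f (l *: x + (1 - l) *: y)%R <= (l * t + (1 - l) * s)%:E)%E.

Definition lsc1 (f : X -> \bar R) : Prop :=
  forall x (t : R), (t%:E < f x)%E ->
    exists2 e : R, 0 < e & forall y, `|y - x| < e -> (t%:E < f y)%E.

Definition subdiff (f : X -> \bar R) (x : X) : set (X -> R) :=
  [set xs | is_dual xs /\ f x \is a fin_num /\
            forall y, (f x + (xs (y - x)%R)%:E <= f y)%E].

End Defs.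

(* If A is 3-monotone, the Fitzpatrick function of order 3,
     F3(x, φ) = sup { φ(a1) + ψ1(a2 - a1) + ψ2(x - a2) | (a1, ψ1), (a2, ψ2) ∈ Gr A },
   is again a representative function of A, so it coincides with F_A when the
   Fitzpatrick family is a singleton.  Taking (a2, ψ2) = (a, ψ) in the supremum
   defining F3 gives F_A(a, φ) + ψ(x - a) <= F_A(x, φ) for every (a, ψ) ∈ Gr A:
   the graph of A lies in the graph of every partial subdifferential of F_A.
   Chaining this inequality along a cycle of Gr A yields cyclic monotonicity, and
   for φ ∈ Im A maximality turns the inclusion A ⊆ ∂F_A(., φ) into equality. *)
From HB Require Import structures.
From mathcomp Require Import all_boot all_order all_algebra.
From mathcomp Require Import all_classical all_reals all_analysis.
From mathcomp Require Import ring lra.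
Import Order.TTheory GRing.Theory Num.Theory.
Import numFieldNormedType.Exports.
Set Implicit Arguments. Unset Strict Implicit.
Local Open Scope classical_set_scope.
Local Open Scope ring_scope.

Section DualFunctionals.
Variables (R : realType) (X : completeNormedModType R).
Implicit Types (f : X -> R) (x y : X).

Lemma is_dual0 f : is_dual f -> f 0 = 0.
Proof. by case=> lin _; have := lin 1 0 0; rewrite scale1r addr0 mul1r; lra. Qed.

Lemma is_dualB f x y : is_dual f -> f (x - y) = f x - f y.
Proof. by move=> [lin _]; have := lin (-1) y x; rewrite scaleN1r addrC => ->; lra. Qed.

Lemma is_dual_convex f (l : R) x y : is_dual f ->
  f (l *: x + (1 - l) *: y) = l * f x + (1 - l) * f y.
Proof.
move=> [lin cf]; rewrite lin; congr (_ + _).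
by have := lin (1 - l) y 0; rewrite addr0 is_dual0 // addr0.
Qed.

Lemma continuous_dist_lt f x (d : R) : continuous f -> 0 < d ->
  exists2 e : R, 0 < e & forall y, `|y - x| < e -> `|f y - f x| < d.
Proof.
move=> cf d0; have near_fx := (cvgrPdist_lt _ _).1 (cf x) d d0.
have [e /= e0 He] := (nbhs_normP x _).1 (near_fx _).
by exists e => // y xy; rewrite distrC; apply: He; rewrite /ball_ /= distrC.
Qed.

Lemma dual_eval_add_lsc f a x (xs : X -> R) (t : R) :
  continuous f -> t < xs a + f x ->
  exists2 e : R, 0 < e & forall y (ys : X -> R),
    `|y - x| < e -> dual_close xs ys e -> t < ys a + f y.
Proof.
move=> cf tlt; set d := (xs a + f x - t) / 2.
have d0 : 0 < d by rewrite /d; lra.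
have [eta eta0 Heta] := continuous_dist_lt x cf d0.
have a1_gt0 : 0 < `|a| + 1 by rewrite ltr_wpDl.
pose eps := d / (`|a| + 1).
have eps0 : 0 < eps by rewrite divr_gt0.
have eps_small : eps * `|a| < d.
  by rewrite -[ltRHS](divfK (lt0r_neq0 a1_gt0)) ltr_pM2l //; lra.
exists (Order.min eta eps) => [|y ys]; first by rewrite lt_min eta0 eps0.
rewrite lt_min => /andP[/Heta /ltr_normlP [fy1 fy2] _] close.
have /ler_normlP [ya1 ya2] : `|ys a - xs a| <= eps * `|a|.
  by apply: le_trans (close a) _; rewrite ler_wpM2r // ge_min lexx orbT.
rewrite /d in d0 eps_small fy1 fy2; lra.
Qed.

End DualFunctionals.

Section Slices.
Variables (R : realType) (X : completeNormedModType R).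
Variable h : X -> (X -> R) -> \bar R.

Lemma proper1_slice v vs : proper2 h -> is_dual vs -> h v vs \is a fin_num ->
  proper1 (h^~ vs).
Proof. by move=> [hN _] dvs hv; split=> [x|]; [apply: hN | exists v]. Qed.

Lemma convex1_slice vs : convex2 h -> is_dual vs -> convex1 (h^~ vs).
Proof.
move=> hc dvs x y l t s hl hx hy; have := hc x vs y vs l t s dvs dvs hl hx hy.
by rewrite (_ : (fun z => l * vs z + (1 - l) * vs z) = vs) //; apply/funext => z; ring.
Qed.

Lemma lsc1_slice vs : lsc2 h -> is_dual vs -> lsc1 (h^~ vs).
Proof.
move=> hl dvs x t /(hl _ _ _ dvs) [e e0 He]; exists e => // y xy.
by apply: He => // z; rewrite subrr normr0 mulr_ge0 // ltW.
Qed.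

End Slices.

Section FitzpatrickOrder3.
Variables (R : realType) (X : completeNormedModType R) (A : X -> set (X -> R)).

Definition fitzpatrick3 (x : X) (xs : X -> R) : \bar R :=
  ereal_sup [set z | exists a1 s1 a2 s2, A a1 s1 /\ A a2 s2 /\
     z = (xs a1 + s1 a2 - s1 a1 + s2 x - s2 a2)%:E].

Lemma fitzpatrick_ub x xs y ys : A y ys ->
  ((ys x + xs y - ys y)%:E <= fitzpatrick A x xs)%E.
Proof. by move=> Ay; apply: ereal_sup_ubound; exists y, ys. Qed.

Lemma fitzpatrick3_ub x xs a1 s1 a2 s2 : A a1 s1 -> A a2 s2 ->
  ((xs a1 + s1 a2 - s1 a1 + s2 x - s2 a2)%:E <= fitzpatrick3 x xs)%E.
Proof. by move=> A1 A2; apply: ereal_sup_ubound; exists a1, s1, a2, s2. Qed.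

Lemma fitzpatrick_shift_le_fitzpatrick3 x xs a as_ : A a as_ ->
  (fitzpatrick A a xs + (as_ x - as_ a)%:E <= fitzpatrick3 x xs)%E.
Proof.
move=> Aa; rewrite -leeBrDr //; apply: ge_ereal_sup => _ [y [ys [Ay ->]]].
rewrite leeBrDr // -EFinD; apply: le_trans (fitzpatrick3_ub x xs Ay Aa).
by rewrite lee_fin; lra.
Qed.

Lemma fitzpatrick_le_fitzpatrick3 x xs :
  (fitzpatrick A x xs <= fitzpatrick3 x xs)%E.
Proof.
apply: ge_ereal_sup => _ [y [ys [Ay ->]]].
by apply: le_trans (fitzpatrick3_ub x xs Ay Ay); rewrite lee_fin; lra.
Qed.

Lemma fitzpatrick3_graph x xs : n_monotone A 3 -> A x xs ->
  fitzpatrick3 x xs = (xs x)%:E.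
Proof.
move=> A3 Ax; apply/eqP; rewrite eq_le; apply/andP; split; last first.
  by apply: le_trans (fitzpatrick3_ub x xs Ax Ax); rewrite lee_fin; lra.
apply: ge_ereal_sup => _ [a1 [s1 [a2 [s2 [A1 [A2 ->]]]]]].
pose a i := match i with 0 => a1 | 1 => a2 | _ => x end%N.
pose as_ i := match i with 0 => s1 | 1 => s2 | _ => xs end%N.
have Aa i : (i < 3)%N -> A (a i) (as_ i) by case: i => [|[|[|]]].
have := A3 a as_ Aa.
by rewrite !big_ord_recr !big_ord0 /= lee_fin; lra.
Qed.

Hypothesis Adual : dual_valued A.

Lemma fitzpatrick3_convex : convex2 fitzpatrick3.
Proof.
move=> x xs y ys l t s _ _ /andP[l0 l1] hx hy.
have l1' : 0 <= 1 - l by rewrite subr_ge0.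
apply: ge_ereal_sup => _ [a1 [s1 [a2 [s2 [A1 [A2 ->]]]]]].
have := le_trans (fitzpatrick3_ub x xs A1 A2) hx.
have := le_trans (fitzpatrick3_ub y ys A1 A2) hy.
rewrite !lee_fin (is_dual_convex _ _ _ (Adual A2)) => /(ler_wpM2l l1') ley.
move=> /(ler_wpM2l l0) lex; lra.
Qed.

Lemma fitzpatrick3_lsc : lsc2 fitzpatrick3.
Proof.
move=> x xs t _ /ereal_sup_gt [_ [a1 [s1 [a2 [s2 [A1 [A2 ->]]]]]]].
rewrite lte_fin => tlt.
have [|e e0 He] := @dual_eval_add_lsc _ _ (s2 : X -> R) a1 x xs
  (t - (s1 a2 - s1 a1 - s2 a2)) (Adual A2).2; first by lra.
exists e => // y ys _ xy close.
apply: lt_le_trans (fitzpatrick3_ub y ys A1 A2); rewrite lte_fin.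
by have := He y ys xy close; lra.
Qed.

Lemma fitzpatrick3_representative : n_monotone A 3 -> (exists v vs, A v vs) ->
  (forall x xs, is_dual xs -> ((xs x)%:E <= fitzpatrick A x xs)%E) ->
  representative A fitzpatrick3.
Proof.
move=> A3 [v [vs Av]] FA_ge.
have F3_ge x xs : is_dual xs -> ((xs x)%:E <= fitzpatrick3 x xs)%E.
  by move=> dxs; apply: le_trans (FA_ge _ _ dxs) (fitzpatrick_le_fitzpatrick3 _ _).
split; last 2 first.
- exact: F3_ge.
- by move=> x xs; apply: fitzpatrick3_graph.
split; [split|split; [exact: fitzpatrick3_convex | exact: fitzpatrick3_lsc]].
- by move=> x xs /(F3_ge x); apply: contraTneq => ->.
- by exists v, vs; split; [exact: Adual Av | rewrite fitzpatrick3_graph].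
Qed.

End FitzpatrickOrder3.

Lemma maximal_monotone_graph_nonempty (R : realType) (X : completeNormedModType R)
  (A : X -> set (X -> R)) : maximal_monotone A -> exists v vs, A v vs.
Proof.
move=> [_ [_ Amax]]; apply: contrapT => A0; apply: (A0); exists 0, (fun=> 0).
apply: Amax => [|y ys Ay]; last by exfalso; apply: A0; exists y, ys.
by split; [move=> *; rewrite mulr0 addr0 | exact: cst_continuous].
Qed.

Section GraphInSubdifferential.
Variables (R : realType) (X : completeNormedModType R) (A : X -> set (X -> R)).
Hypothesis Adual : dual_valued A.
Hypothesis FA_rep : representative A (fitzpatrick A).
Hypothesis fitzpatrick_subgradient : forall x xs a as_, is_dual xs -> A a as_ ->
  (fitzpatrick A a xs + (as_ x - as_ a)%:E <= fitzpatrick A x xs)%E.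

Lemma fitzpatrick_graph x xs : A x xs -> fitzpatrick A x xs = (xs x)%:E.
Proof. by case: FA_rep => _ _; apply. Qed.

Lemma fitzpatrick_ge x xs : is_dual xs -> ((xs x)%:E <= fitzpatrick A x xs)%E.
Proof. by case: FA_rep => _ + _; apply. Qed.

Lemma fitzpatrick_chain_le m (b : nat -> X) (bs : nat -> X -> R) xs :
  (forall i, (i <= m)%N -> A (b i) (bs i)) -> is_dual xs -> forall x,
  ((xs (b 0%N) + \sum_(i < m) (bs i (b i.+1) - bs i (b i))
     + (bs m x - bs m (b m)))%:E <= fitzpatrick A x xs)%E.
Proof.
elim: m => [|m IH] Ab dxs x.
  apply: le_trans (fitzpatrick_ub _ _ (Ab 0%N isT)).
  by rewrite big_ord0 lee_fin; lra.
apply: le_trans (fitzpatrick_subgradient x dxs (Ab m.+1 (leqnn _))).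
apply: le_trans (leeD2r _ (IH (fun i lei => Ab i (leqW lei)) dxs (b m.+1))).
by rewrite -EFinD lee_fin big_ord_recr /=; lra.
Qed.

Lemma cyclically_monotone_of_subgradient : cyclically_monotone A.
Proof.
case=> [|m] a as_ Aa; first by rewrite !big_ord0.
have := fitzpatrick_chain_le Aa (Adual (Aa 0%N isT)) (a 0%N).
rewrite fitzpatrick_graph ?lee_fin; last exact: Aa.
rewrite !big_ord_recr /= modnn sumrB.
rewrite (eq_bigr (fun i : 'I_m => as_ i (a i.+1))); first lra.
by move=> i _; rewrite modn_small // ltnS.
Qed.

Lemma graph_sub_subdiff_fitzpatrick vs x xs : Im_op A vs -> A x xs ->
  subdiff (fun y => fitzpatrick A y vs) x xs.
Proof.
move=> [v Av] Ax; have dvs := Adual Av.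
have lo := fitzpatrick_ge x dvs.
have up : (fitzpatrick A x vs <= (vs v - (xs v - xs x))%:E)%E.
  by rewrite EFinB leeBrDr // -(fitzpatrick_graph Av); apply: fitzpatrick_subgradient.
have dxs := Adual Ax; split=> //.
split=> [|y]; last by rewrite (is_dualB _ _ dxs); apply: fitzpatrick_subgradient.
rewrite fin_numElt (lt_le_trans _ lo) ?ltNyr //=.
by apply: le_lt_trans up _; rewrite ltry.
Qed.

Lemma subdiff_fitzpatrick_sub_graph vs x xs : maximal_monotone A -> Im_op A vs ->
  subdiff (fun y => fitzpatrick A y vs) x xs -> A x xs.
Proof.
move=> [_ [_ Amax]] Avs [dxs [finx subx]]; apply: Amax => // y ys Ay.
have [dys [finy suby]] := graph_sub_subdiff_fitzpatrick Avs Ay.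
have := subx y; have := suby x.
rewrite !(is_dualB _ _ dxs) !(is_dualB _ _ dys).
rewrite -(fineK finx) -(fineK finy) -!EFinD !lee_fin; lra.
Qed.

End GraphInSubdifferential.

Theorem theoremA (R : realType) (X : completeNormedModType R)
    (A : X -> set (X -> R))
    (HA : maximal_monotone A)
    (HF : representative A (fitzpatrick A))
    (Hsing : forall h, representative A h ->
       forall x xs, is_dual xs -> h x xs = fitzpatrick A x xs) :
  (n_monotone A 3 <-> cyclically_monotone A) /\
  (cyclically_monotone A ->
   forall vs, Im_op A vs ->
     [/\ proper1 (fun x => fitzpatrick A x vs),
         convex1 (fun x => fitzpatrick A x vs),
         lsc1 (fun x => fitzpatrick A x vs) &
         forall x, A x = subdiff (fun y => fitzpatrick A y vs) x]).
Proof.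
have Adual : dual_valued A := HA.1.
have subgradient (A3 : n_monotone A 3) x xs a as_ : is_dual xs -> A a as_ ->
    (fitzpatrick A a xs + (as_ x - as_ a)%:E <= fitzpatrick A x xs)%E.
  move=> dxs Aa; rewrite -(Hsing _ (fitzpatrick3_representative Adual A3
    (maximal_monotone_graph_nonempty HA) (fitzpatrick_ge HF)) x _ dxs).
  exact: fitzpatrick_shift_le_fitzpatrick3.
split.
  split=> [A3|Acyc]; last exact: Acyc.
  exact: cyclically_monotone_of_subgradient Adual HF (subgradient A3).
move=> Acyc vs Avs; have [v Av] := Avs; have dvs := Adual _ _ Av.
have [[Fproper [Fconvex Flsc]] _ _] := HF.
split.
- by apply: (proper1_slice (v := v)) Fproper dvs _; rewrite (fitzpatrick_graph HF Av).
- exact: convex1_slice.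
- exact: lsc1_slice.
- move=> x; apply/seteqP; split=> xs.
    exact: (graph_sub_subdiff_fitzpatrick Adual HF (subgradient (Acyc 3%N)) Avs).
  exact: (subdiff_fitzpatrick_sub_graph Adual HF (subgradient (Acyc 3%N)) HA Avs).
Qed.
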